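(* Let $n\in\mathbb{N}$, let $p_1,\ldots,p_n\in\mathbb{H}$ with $p_n\neq 0$, let $d_0\in\{0,1\}$, and consider the equation $$p_nx^n+\cdots+p_1x+d_0=0,\qquad x\in\mathbb{H}.$$ Write $p_i=t_1^{(i)}+t_2^{(i)}\mathbf{j}$ with $t_1^{(i)},t_2^{(i)}\in\mathbb{C}$ ($i=1,\ldots,n$), and define the derived polynomials (in a complex variable $t$) $$f_1(t)=t_1^{(n)}t^n+\cdots+t_1^{(1)}t+d_0,\qquad f_2(t)=t_2^{(n)}t^n+\cdots+t_2^{(1)}t,$$ $$\bar f_1(t)=\overline{t_1^{(n)}}t^n+\cdots+\overline{t_1^{(1)}}t+d_0,\qquad \bar f_2(t)=\overline{t_2^{(n)}}t^n+\cdots+\overline{t_2^{(1)}}t,$$ and the discriminant polynomial $\tilde p(t)=f_1(t)\bar f_1(t)+f_2(t)\bar f_2(t)$, which has real coefficients. Let $\xi_1,\ldots,\xi_s$ be the distinct real roots of $\tilde p$, and let the distinct nonreal roots of $\tilde p$ be $\eta_1,\overline{\eta_1},\ldots,\eta_k,\overline{\eta_k}$ (one representative $\eta_i$ chosen from each conjugate pair). Put $$T_1=\{\eta\in\{\eta_1,\ldots,\eta_k\}: f_1(\eta)=f_2(\eta)=\bar f_1(\eta)=\bar f_2(\eta)=0\},\qquad T_2=\{\eta_1,\ldots,\eta_k\}\setminus T_1.$$ Then the solution set of the equation in $\mathbb{H}$ is the disjoint union $$\{\xi_1,\ldots,\xi_s\}\ \dot\cup\ \dot{\bigcup_{\eta_i\in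 T_2}}\{\omega_i\}\ \dot\cup\ \dot{\bigcup_{\eta_i\in T_1}}[\eta_i],$$ where, if $|f_1(\eta_i)|^2+|f_2(\eta_i)|^2\neq 0$, $$\omega_i=\frac{1}{|f_1(\eta_i)|^2+|f_2(\eta_i)|^2}\Big\{|f_2(\eta_i)|^2\eta_i+|f_1(\eta_i)|^2\overline{\eta_i}-2f_2(\eta_i)\overline{f_1(\eta_i)}(\operatorname{Im}\eta_i)\mathbf{k}\Big\},$$ and otherwise $$\omega_i=\frac{1}{|f_1(\overline{\eta_i})|^2+|f_2(\overline{\eta_i})|^2}\Big\{|f_1(\overline{\eta_i})|^2\eta_i+|f_2(\overline{\eta_i})|^2\overline{\eta_i}+2f_2(\overline{\eta_i})\overline{f_1(\overline{\eta_i})}(\operatorname{Im}\eta_i)\mathbf{k}\Big\}.$$ Here $\operatorname{Im}\eta_i$ is the (real) imaginary part of $\eta_i$. Moreover, $\{\xi_1,\ldots,\xi_s\}\cup\bigcup_{\eta_i\in T_2}\{\omega_i\}$ is exactly the set of isolated zeros and $\bigcup_{\eta_i\in T_1}[\eta_i]$ is exactly the set of spherical zeros of $p(x)=p_nx^n+\cdots+p_1x+d_0$.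
   Context: $\mathbb{H}$ denotes the real quaternions with units $\mathbf{i},\mathbf{j},\mathbf{k}$ ($\mathbf{i}^2=\mathbf{j}^2=\mathbf{k}^2=-1$, $\mathbf{ij}=-\mathbf{ji}=\mathbf{k}$, etc.), and $\mathbb{C}=\mathbb{R}\oplus\mathbb{R}\mathbf{i}\subset\mathbb{H}$. For $q\in\mathbb{H}$, $[q]=\{aqa^{-1}: a\in\mathbb{H}, a\neq 0\}$ is its conjugacy class. For a complex number $z$, $|z|$ is its modulus and $\bar z$ its complex conjugate. A zero $z_0$ of a polynomial $p(x)=\sum p_ix^i$ (coefficients on the left) is called spherical if $z_0$ is not real and $p(z)=0$ for all $z\in[z_0]$; a zero that is real or not spherical is called isolated. *)

From HB Require Import structures.
From mathcomp Require Import all_boot all_order all_algebra.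
From mathcomp Require Import complex.
From mathcomp Require Import ring.

Set Implicit Arguments.
Unset Strict Implicit.
Unset Printing Implicit Defensive.
Import Order.TTheory GRing.Theory Num.Theory.
Local Open Scope ring_scope.

Record quat (R : Type) : Type := Quat { qa : R; qb : R; qc : R; qd : R }.
(* Quat a b c d  stands for  a + b i + c j + d k. *)

Module QuatEqChoice.
Section S.
Variable R : Type.
Definition seq_of_quat (q : quat R) := let: Quat a b c d := q in [:: a; b; c; d].
Definition quat_of_seq (s : seq R) :=
  if s is [:: a; b; c; d] then Some (Quat a b c d) else None.
Lemma quat_of_seqK : pcancel seq_of_quat quat_of_seq. Proof. by case. Qed.
End S.
End QuatEqChoice.

HB.instance Definition _ (R : eqType) := Equality.copy (quat R)
  (pcan_type (@QuatEqChoice.quat_of_seqK R)).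
HB.instance Definition _ (R : choiceType) := Choice.copy (quat R)
  (pcan_type (@QuatEqChoice.quat_of_seqK R)).

Section QuatRing.
Variable R : comNzRingType.
Local Notation H := (quat R).

Definition qadd (x y : H) := Quat (qa x + qa y) (qb x + qb y) (qc x + qc y) (qd x + qd y).
Definition qopp (x : H) := Quat (- qa x) (- qb x) (- qc x) (- qd x).
Definition qzero : H := Quat 0 0 0 0.

Lemma qaddA : associative qadd.
Proof. by move=> [? ? ? ?] [? ? ? ?] [? ? ? ?]; rewrite /qadd /=; congr Quat; ring. Qed.
Lemma qaddC : commutative qadd.
Proof. by move=> [? ? ? ?] [? ? ? ?]; rewrite /qadd /=; congr Quat; ring. Qed.
Lemma qadd0 : left_id qzero qadd.
Proof. by move=> [? ? ? ?]; rewrite /qadd /=; congr Quat; ring. Qed.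
Lemma qaddN : left_inverse qzero qopp qadd.
Proof. by move=> [? ? ? ?]; rewrite /qadd /=; congr Quat; ring. Qed.

HB.instance Definition _ := GRing.isZmodule.Build H qaddA qaddC qadd0 qaddN.

(* Hamilton product: i^2 = j^2 = k^2 = -1, ij = -ji = k, jk = -kj = i, ki = -ik = j *)
Definition qmul (x y : H) :=
  let: Quat a1 b1 c1 d1 := x in let: Quat a2 b2 c2 d2 := y in
  Quat (a1 * a2 - b1 * b2 - c1 * c2 - d1 * d2)
       (a1 * b2 + b1 * a2 + c1 * d2 - d1 * c2)
       (a1 * c2 - b1 * d2 + c1 * a2 + d1 * b2)
       (a1 * d2 + b1 * c2 - c1 * b2 + d1 * a2).
Definition qone : H := Quat 1 0 0 0.

Lemma qmulA : associative qmul.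
Proof. by move=> [? ? ? ?] [? ? ? ?] [? ? ? ?]; rewrite /qmul /=; congr Quat; ring. Qed.
Lemma qmul1 : left_id qone qmul.
Proof. by move=> [? ? ? ?]; rewrite /qmul /=; congr Quat; ring. Qed.
Lemma qmulr1 : right_id qone qmul.
Proof. by move=> [? ? ? ?]; rewrite /qmul /=; congr Quat; ring. Qed.
Lemma qmulDl : left_distributive qmul +%R.
Proof.
move=> x y z; change (qmul (qadd x y) z = qadd (qmul x z) (qmul y z)).
by case: x y z => [? ? ? ?] [? ? ? ?] [? ? ? ?]; rewrite /qmul /= /qadd /=; congr Quat; ring.
Qed.
Lemma qmulDr : right_distributive qmul +%R.
Proof.
move=> x y z; change (qmul x (qadd y z) = qadd (qmul x y) (qmul x z)).
by case: x y z => [? ? ? ?] [? ? ? ?] [? ? ? ?]; rewrite /qmul /= /qadd /=; congr Quat; ring.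
Qed.
Lemma qone_neq0 : qone != 0.
Proof. by apply/eqP => -[/eqP]; rewrite oner_eq0. Qed.

HB.instance Definition _ := GRing.Zmodule_isNzRing.Build H
  qmulA qmul1 qmulr1 qmulDl qmulDr qone_neq0.

Definition qi : H := Quat 0 1 0 0.
Definition qj : H := Quat 0 0 1 0.
Definition qk : H := Quat 0 0 0 1.

End QuatRing.

Section QuatField.
Variable R : rcfType.
Local Notation H := (quat R).

Definition qinv (q : H) : H :=
  let n2 := qa q ^+ 2 + qb q ^+ 2 + qc q ^+ 2 + qd q ^+ 2 in
  Quat (qa q / n2) (- qb q / n2) (- qc q / n2) (- qd q / n2).

Definition qclass (q : H) (y : H) : Prop :=
  exists2 a : H, a != 0 & y = a * q * qinv a.

Definition qreal (q : H) : Prop := [/\ qb q = 0, qc q = 0 & qd q = 0].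

Definition qofC (z : R[i]) : H := Quat (complex.Re z) (complex.Im z) 0 0.

Definition qhorner (n : nat) (c : nat -> H) (x : H) : H :=
  \sum_(i < n.+1) c i * x ^+ i.

Definition qzero_of (n : nat) (c : nat -> H) (z : H) : Prop := qhorner n c z = 0.
Definition spherical_zero (n : nat) (c : nat -> H) (z : H) : Prop :=
  ~ qreal z /\ (forall w, qclass z w -> qhorner n c w = 0).
Definition isolated_zero (n : nat) (c : nat -> H) (z : H) : Prop :=
  qzero_of n c z /\ ~ spherical_zero n c z.

(* the decomposition  q = t1 + t2 j  with t1, t2 in C:
   a + b i + c j + d k = (a + b i) + (c + d i) j *)
Definition qt1 (q : H) : R[i] := Complex (qa q) (qb q).
Definition qt2 (q : H) : R[i] := Complex (qc q) (qd q).

(* The data of the theorem: coefficients p_1..p_n (p : nat -> H, p 0 unused)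
   and constant term d0 (a real number). *)
Definition qcoefs (p : nat -> H) (d0 : R) (i : nat) : H :=
  if i == 0%N then Quat d0 0 0 0 else p i.

Definition f1 (n : nat) (p : nat -> H) (d0 : R) : {poly R[i]} :=
  \poly_(i < n.+1) (if i == 0%N then Complex d0 0 else qt1 (p i)).
Definition f2 (n : nat) (p : nat -> H) : {poly R[i]} :=
  \poly_(i < n.+1) (if i == 0%N then 0 else qt2 (p i)).
Definition f1bar (n : nat) (p : nat -> H) (d0 : R) : {poly R[i]} :=
  \poly_(i < n.+1) (if i == 0%N then Complex d0 0 else conjc (qt1 (p i))).
Definition f2bar (n : nat) (p : nat -> H) : {poly R[i]} :=
  \poly_(i < n.+1) (if i == 0%N then 0 else conjc (qt2 (p i))).

Definition ptilde (n : nat) (p : nat -> H) (d0 : R) : {poly R[i]} :=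
  f1 n p d0 * f1bar n p d0 + f2 n p * f2bar n p.

Definition csq (z : R[i]) : R[i] := z * conjc z.

Definition omega (n : nat) (p : nat -> H) (d0 : R) (eta : R[i]) : H :=
  let F1 := (f1 n p d0).[eta] in let F2 := (f2 n p).[eta] in
  let G1 := (f1 n p d0).[conjc eta] in let G2 := (f2 n p).[conjc eta] in
  let imeta : R[i] := Complex (complex.Im eta) 0 in
  let two : R[i] := 2 in
  if csq F1 + csq F2 != 0 then
    qofC ((csq F1 + csq F2)^-1 * (csq F2 * eta + csq F1 * conjc eta))
    - qofC ((csq F1 + csq F2)^-1 * (two * F2 * conjc F1 * imeta)) * qk R
  else
    qofC ((csq G1 + csq G2)^-1 * (csq G1 * eta + csq G2 * conjc eta))
    + qofC ((csq G1 + csq G2)^-1 * (two * G2 * conjc G1 * imeta)) * qk R.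

Definition inT1 (n : nat) (p : nat -> H) (d0 : R) (eta : R[i]) : Prop :=
  [/\ (f1 n p d0).[eta] = 0, (f2 n p).[eta] = 0,
      (f1bar n p d0).[eta] = 0 & (f2bar n p).[eta] = 0].

(* the three pieces of the solution set, given the list S = [eta_1;...;eta_k]
   of chosen representatives of the nonreal roots of ptilde *)
Definition part_real (n : nat) (p : nat -> H) (d0 : R) (x : H) : Prop :=
  exists xi : R, root (ptilde n p d0) (Complex xi 0) /\ x = Quat xi 0 0 0.
Definition part_omega (n : nat) (p : nat -> H) (d0 : R) (S : seq R[i]) (x : H) : Prop :=
  exists2 eta, eta \in S & ~ inT1 n p d0 eta /\ x = omega n p d0 eta.
Definition part_sphere (n : nat) (p : nat -> H) (d0 : R) (S : seq R[i]) (x : H) : Prop :=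
  exists2 eta, eta \in S & inT1 n p d0 eta /\ qclass (qofC eta) x.

Definition nonreal_reps (P : {poly R[i]}) (S : seq R[i]) : Prop :=
  [/\ uniq S,
      (forall eta, eta \in S -> root P eta /\ complex.Im eta != 0),
      (forall eta, eta \in S -> conjc eta \notin S) &
      (forall z, root P z -> complex.Im z != 0 -> z \in S \/ conjc z \in S)].

End QuatField.

(* Every quaternion x satisfies x^2 = 2 Re(x) x - |x|^2, so x^k = A_k x + B_k
   with real A_k, B_k depending only on a = Re x and N = |x|^2; hence
   p(x) = P x + Q where P = P(a, N) and Q = Q(a, N) are constant on the
   conjugacy class of x.  A complex w with w^2 = 2 a w - N obeys the same
   reduction, which identifies f1(w), f2(w) and their barred versions with the
   complex components of P w + Q and its conjugate, so that ptilde(w) is the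
   norm form of P w + Q.  Thus a zero x yields a root of ptilde with the same
   invariants, real roots of ptilde are zeros, and for a nonreal root eta either
   P = Q = 0 (eta in T1, the whole class [eta] consists of zeros) or [eta]
   contains exactly one zero, x = - P^-1 Q, whose explicit form is omega. *)

From HB Require Import structures.
From mathcomp Require Import all_boot all_order all_algebra.
From mathcomp Require Import complex.
From mathcomp Require Import ring.
Import Order.TTheory GRing.Theory Num.Theory.
Local Open Scope ring_scope.
Local Open Scope complex_scope.
Set Implicit Arguments.
Unset Strict Implicit.

Section ComplexFacts.
Variable R : rcfType.
Local Notation C := R[i].
Implicit Types u v z : C.

Lemma conjcD u v : conjc (u + v) = conjc u + conjc v. Proof. exact: rmorphD. Qed.
Lemma conjcB u v : conjc (u - v) = conjc u - conjc v. Proof. exact: rmorphB. Qed.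
Lemma conjcN u : conjc (- u) = - conjc u. Proof. exact: rmorphN. Qed.
Lemma conjcM u v : conjc (u * v) = conjc u * conjc v. Proof. exact: rmorphM. Qed.

Definition conjcE :=
  (conjcD, conjcB, conjcN, conjcM, conjc_inv, conjc_nat, conjc_real, conjcK).

Definition cnorm2 z : R := complex.Re z ^+ 2 + complex.Im z ^+ 2.

Lemma complex_quadratic z : z * z = (2 * complex.Re z)%:C * z - (cnorm2 z)%:C.
Proof. by case: z => a b; rewrite /cnorm2 /=; simpc; congr Complex; ring. Qed.

Lemma cnorm2_mulcJ z : (cnorm2 z)%:C = z * conjc z.
Proof. by case: z => a b; rewrite /cnorm2 /=; simpc; congr Complex; ring. Qed.

Lemma mulcJ_addr_eq0 u v : u * conjc u + v * conjc v = 0 -> u = 0 /\ v = 0.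
Proof.
move/eqP; rewrite paddr_eq0 ?mulcJ_ge0 // !mulf_eq0 !conjc_eq0 !orbb.
by case/andP => /eqP-> /eqP->.
Qed.

Lemma subcJ_neq0 z : complex.Im z != 0 -> z - conjc z != 0.
Proof.
move=> znr; rewrite subcJ !mulf_eq0 !negb_or pnatr_eq0 /=.
by rewrite !eq_complex /= eqxx oner_eq0 andbF andbT znr.
Qed.

Lemma affine_eq0_conj (P Q z : C) : complex.Im z != 0 ->
  P * z + Q = 0 -> P * conjc z + Q = 0 -> P = 0 /\ Q = 0.
Proof.
move=> znr hz hzJ; have : P * (z - conjc z) = (P * z + Q) - (P * conjc z + Q) by ring.
rewrite hz hzJ subrr => /eqP; rewrite mulf_eq0 (negbTE (subcJ_neq0 znr)) orbF => /eqP P0.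
by split=> //; move: hz; rewrite P0 mul0r add0r.
Qed.

Lemma eq_Re_cnorm2 z z' : complex.Re z = complex.Re z' -> cnorm2 z = cnorm2 z' ->
  z' = z \/ z' = conjc z.
Proof.
case: z z' => [a b] [a' b'] /= <-; rewrite /cnorm2 /= => /addrI /eqP.
by rewrite eq_sym eqf_sqr => /orP[/eqP->|/eqP->]; [left|right].
Qed.

Lemma Re_conjc z : complex.Re (conjc z) = complex.Re z. Proof. by case: z. Qed.
Lemma Im_conjc z : complex.Im (conjc z) = - complex.Im z. Proof. by case: z. Qed.
Lemma cnorm2_conjc z : cnorm2 (conjc z) = cnorm2 z.
Proof. by case: z => a b; rewrite /cnorm2 /= sqrrN. Qed.

Lemma complex_quadraticJ z :
  conjc z * conjc z = (2 * complex.Re z)%:C * conjc z - (cnorm2 z)%:C.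
Proof. by rewrite -Re_conjc -cnorm2_conjc complex_quadratic. Qed.

End ComplexFacts.

Section QuatUnitRing.
Variable R : rcfType.
Local Notation H := (quat R).
Implicit Types x y : H.

Definition qnorm2 x : R := qa x ^+ 2 + qb x ^+ 2 + qc x ^+ 2 + qd x ^+ 2.

Lemma qnorm2_eq0 x : (qnorm2 x == 0) = (x == 0).
Proof.
case: x => a b c d; rewrite /qnorm2 /= !paddr_eq0 ?addr_ge0 ?sqr_ge0 // !sqrf_eq0.
apply/idP/eqP => [/andP[/andP[/andP[/eqP-> /eqP->] /eqP->] /eqP->] // | [-> -> -> ->]].
by rewrite eqxx.
Qed.

Lemma qnorm2M x y : qnorm2 (x * y) = qnorm2 x * qnorm2 y.
Proof. by case: x y => [a b c d] [e f g h]; rewrite /qnorm2 /=; ring. Qed.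

Lemma quat_mulVr x : x != 0 -> qinv x * x = 1.
Proof.
rewrite -qnorm2_eq0; case: x => a b c d; rewrite /qnorm2 /= => nz.
by rewrite -[_ * _]/(qmul _ _) /qmul /qinv /=; congr Quat; field.
Qed.

Lemma quat_mulrV x : x != 0 -> x * qinv x = 1.
Proof.
rewrite -qnorm2_eq0; case: x => a b c d; rewrite /qnorm2 /= => nz.
by rewrite -[_ * _]/(qmul _ _) /qmul /qinv /=; congr Quat; field.
Qed.

Lemma quat_unitrP x y : y * x = 1 /\ x * y = 1 -> x != 0.
Proof. by case=> _; apply: contra_eq_neq => ->; rewrite mul0r eq_sym oner_neq0. Qed.

Lemma qinv0 : qinv (0 : H) = 0.
Proof. by rewrite /qinv /= !(expr0n, mul0r, oppr0, addr0). Qed.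

Lemma quat_invr_out : {in [predC [pred x : H | x != 0]], @qinv R =1 id}.
Proof. by move=> x; rewrite !inE negbK => /eqP->; exact: qinv0. Qed.

HB.instance Definition _ := GRing.NzRing_hasMulInverse.Build H
  quat_mulVr quat_mulrV quat_unitrP quat_invr_out.

Lemma qunitE x : (x \is a GRing.unit) = (x != 0). Proof. by []. Qed.
Lemma qinvE x : qinv x = x^-1. Proof. by []. Qed.

End QuatUnitRing.

Section QuadraticPowers.
Variable R : pzRingType.

Fixpoint quad_pow_coefs (a N : R) (k : nat) : R * R :=
  if k is k'.+1 then
    let: (A, B) := quad_pow_coefs a N k' in (A * (2 * a) + B, - (A * N))
  else (0, 1).

Lemma quad_pow (T : pzRingType) (f : {rmorphism R -> T}) (a N : R) (x : T) :
  x * x = f (2 * a) * x - f N ->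
  forall k, x ^+ k = f (quad_pow_coefs a N k).1 * x + f (quad_pow_coefs a N k).2.
Proof.
move=> xx; elim=> [|k IHk] /=; first by rewrite rmorph0 rmorph1 mul0r add0r.
rewrite exprSr IHk; case: (quad_pow_coefs a N k) => A B /=.
by rewrite mulrDl -mulrA xx rmorphD rmorphN !rmorphM mulrBr !mulrA mulrDl addrAC.
Qed.

End QuadraticPowers.

Section ComplexPairs.
Variable R : rcfType.
Local Notation H := (quat R).
Local Notation C := R[i].
Implicit Types (x y : H) (u v z : C).

Definition quatC u v : H := Quat (complex.Re u) (complex.Im u) (complex.Re v) (complex.Im v).

Lemma quatC_split x : x = quatC (qt1 x) (qt2 x). Proof. by case: x. Qed.
Lemma qt1_quatC u v : qt1 (quatC u v) = u. Proof. by case: u. Qed.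
Lemma qt2_quatC u v : qt2 (quatC u v) = v. Proof. by case: v. Qed.

Lemma quatCD u v u' v' : quatC u v + quatC u' v' = quatC (u + u') (v + v').
Proof. by case: u v u' v' => [? ?] [? ?] [? ?] [? ?]. Qed.

Lemma quatCN u v : - quatC u v = quatC (- u) (- v).
Proof. by case: u v => [? ?] [? ?]. Qed.

Lemma quatCM u v u' v' :
  quatC u v * quatC u' v' = quatC (u * u' - v * conjc v') (u * v' + v * conjc u').
Proof.
case: u v u' v' => [a b] [c d] [e f] [g h].
by rewrite -[_ * _]/(qmul _ _) /qmul /=; congr Quat; simpc; rewrite /=; ring.
Qed.

Lemma quatC_eq0 u v : (quatC u v == 0) = (u == 0) && (v == 0).
Proof.
case: u v => [a b] [c d]; rewrite !eq_complex /=.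
by apply/eqP/and3P => [[-> -> -> ->]|[/andP[/eqP-> /eqP->] /eqP-> /eqP->]]; rewrite ?eqxx.
Qed.

Lemma qofC_quatC z : qofC z = quatC z 0. Proof. by case: z. Qed.
Lemma qofCN z : qofC (- z) = - qofC z.
Proof. by rewrite !qofC_quatC quatCN oppr0. Qed.

Lemma qk_quatC : qk R = quatC 0 'i. Proof. by []. Qed.

Definition qofR (r : R) : H := Quat r 0 0 0.

Lemma qofR_quatC r : qofR r = quatC r%:C 0. Proof. by []. Qed.

Lemma qofR_is_nmod_morphism : nmod_morphism qofR.
Proof. by split=> // r s; rewrite !qofR_quatC quatCD rmorphD addr0. Qed.

Lemma qofR_is_monoid_morphism : monoid_morphism qofR.
Proof.
split=> // r s; rewrite !qofR_quatC quatCM rmorphM.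
by rewrite !(mul0r, mulr0, subr0, addr0).
Qed.

HB.instance Definition _ := GRing.isNmodMorphism.Build R H qofR qofR_is_nmod_morphism.
HB.instance Definition _ := GRing.isMonoidMorphism.Build R H qofR qofR_is_monoid_morphism.

Lemma mulq_qofR x r : x * qofR r = quatC (qt1 x * r%:C) (qt2 x * r%:C).
Proof.
rewrite [x]quatC_split qofR_quatC quatCM !qt1_quatC !qt2_quatC rmorph0 conjc_real.
by rewrite !mulr0 subr0 add0r.
Qed.

Lemma qt1_is_nmod_morphism : nmod_morphism (@qt1 R).
Proof. by split=> // -[? ? ? ?] [? ? ? ?]. Qed.
Lemma qt2_is_nmod_morphism : nmod_morphism (@qt2 R).
Proof. by split=> // -[? ? ? ?] [? ? ? ?]. Qed.

HB.instance Definition _ := GRing.isNmodMorphism.Build H C (@qt1 R) qt1_is_nmod_morphism.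
HB.instance Definition _ := GRing.isNmodMorphism.Build H C (@qt2 R) qt2_is_nmod_morphism.

Lemma quat_quadratic x : x * x = qofR (2 * qa x) * x - qofR (qnorm2 x).
Proof.
case: x => a b c d.
rewrite -[_ * _]/(qmul _ _) -[qofR _ * _]/(qmul _ _) -[_ - _]/(qadd _ (qopp _)).
by rewrite /qmul /qadd /qopp /qofR /qnorm2 /=; congr Quat; ring.
Qed.

Lemma mul_add_quatC (A B x : H) : A * x + B =
  quatC (qt1 A * qt1 x - qt2 A * conjc (qt2 x) + qt1 B)
        (qt1 A * qt2 x + qt2 A * conjc (qt1 x) + qt2 B).
Proof. by rewrite {1}[A]quatC_split {1}[x]quatC_split {1}[B]quatC_split quatCM quatCD. Qed.

Lemma mul_add_qofC (A B : H) w :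
  A * qofC w + B = quatC (qt1 A * w + qt1 B) (qt2 A * conjc w + qt2 B).
Proof. by rewrite qofC_quatC mul_add_quatC qt1_quatC qt2_quatC rmorph0 !mulr0 subr0 add0r. Qed.

Lemma qt1_add_conjc x : qt1 x + conjc (qt1 x) = (2 * qa x)%:C.
Proof. by case: x => a b c d /=; simpc; rewrite /=; congr Complex; ring. Qed.

Lemma qnorm2_qt x : qt1 x * conjc (qt1 x) + qt2 x * conjc (qt2 x) = (qnorm2 x)%:C.
Proof. by case: x => a b c d; rewrite /qnorm2 /=; simpc; rewrite /=; congr Complex; ring. Qed.

Lemma solution_in_class (A B : H) (X1 X2 e : C) :
  qt1 A * X1 - qt2 A * conjc X2 + qt1 B = 0 -> qt1 A * X2 + qt2 A * conjc X1 + qt2 B = 0 ->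
  X1 + conjc X1 = e + conjc e -> X1 * conjc X1 + X2 * conjc X2 = e * conjc e ->
  [/\ qa (quatC X1 X2) = complex.Re e, qnorm2 (quatC X1 X2) = cnorm2 e
    & A * quatC X1 X2 + B = 0].
Proof.
move=> h1 h2 h3 h4; split.
- apply: (@mulfI _ 2); first by rewrite pnatr_eq0.
  by apply: complexI; rewrite -qt1_add_conjc qt1_quatC h3 addcJ rmorphM rmorph_nat.
- by apply: complexI; rewrite -qnorm2_qt qt1_quatC qt2_quatC h4 cnorm2_mulcJ.
- by rewrite mul_add_quatC qt1_quatC qt2_quatC h1 h2; apply/eqP; rewrite quatC_eq0 eqxx.
Qed.

End ComplexPairs.

Section ConjugacyClasses.
Variable R : rcfType.
Local Notation H := (quat R).
Local Notation C := R[i].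
Implicit Types (q x y g : H) (z : C).

Definition qim2 x : R := qb x ^+ 2 + qc x ^+ 2 + qd x ^+ 2.

Lemma qclass_conjugator q x g : g != 0 -> g * q = x * g -> qclass q x.
Proof. by move=> gnz gq; exists g => //; rewrite gq qinvE mulrK ?qunitE. Qed.

Lemma qclass_refl q : qclass q q.
Proof. by exists 1; rewrite ?oner_neq0 // qinvE invr1 mul1r mulr1. Qed.

Lemma qclass_sym q x : qclass q x -> qclass x q.
Proof.
case=> g gnz ->; exists g^-1; first by rewrite invr_neq0.
by rewrite !qinvE invrK !mulrA mulVr ?qunitE // mul1r divrK ?qunitE.
Qed.

Lemma qclass_trans q x y : qclass q x -> qclass x y -> qclass q y.
Proof.
case=> g gnz -> [h hnz ->]; exists (h * g); first by rewrite -qunitE unitrMl.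
by rewrite !qinvE invrM ?qunitE // !mulrA.
Qed.

Lemma qclass_invariants q x : qclass q x -> qa x = qa q /\ qnorm2 x = qnorm2 q.
Proof.
case=> g gnz ->; split.
  move: gnz; rewrite -qnorm2_eq0; case: g q => [a b c d] [e f g h].
  by rewrite /qnorm2 /= => nz; field.
have normV : qnorm2 g * qnorm2 (qinv g) = 1.
  by rewrite -qnorm2M qinvE mulrV ?qunitE // /qnorm2 /=; ring.
by rewrite !qnorm2M mulrAC normV mul1r.
Qed.

(* With v the imaginary part of x, the conjugator is Im z * (Im z - v i);
   it vanishes only when v = - (Im z) i, and then j conjugates instead. *)
Lemma qclass_qofC z x : complex.Im z != 0 ->
  qa x = complex.Re z -> qnorm2 x = cnorm2 z -> qclass (qofC z) x.
Proof.
case: z => al be /=; case: x => a x1 x2 x3 /= benz -> ; rewrite /qnorm2 /cnorm2 /= => hN.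
have hs : x1 ^+ 2 + x2 ^+ 2 + x3 ^+ 2 = be ^+ 2.
  by apply: (addrI (al ^+ 2)); rewrite -hN; ring.
have [g0|gnz] := eqVneq (Quat (be ^+ 2 + x1 * be) 0 (- (x3 * be)) (x2 * be)) 0.
  case: g0 => h1 h2 h3.
  have -> : x3 = 0 by move/eqP: h2; rewrite oppr_eq0 mulf_eq0 (negbTE benz) orbF => /eqP.
  have -> : x2 = 0 by move/eqP: h3; rewrite mulf_eq0 (negbTE benz) orbF => /eqP.
  have -> : x1 = - be.
    have : (be + x1) * be = 0 by rewrite -h1; ring.
    by move/eqP; rewrite mulf_eq0 (negbTE benz) orbF addrC addr_eq0 => /eqP.
  apply: (@qclass_conjugator _ _ (qj R)); first by apply/eqP => -[/eqP]; rewrite oner_eq0.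
  by rewrite -[_ * _]/(qmul _ _) -[Quat _ _ _ _ * _]/(qmul _ _) /qmul /=; congr Quat; ring.
apply: (qclass_conjugator gnz).
rewrite -[_ * _]/(qmul _ _) -[Quat _ _ _ _ * _]/(qmul _ _) /qmul /=; congr Quat; try ring.
apply/eqP; rewrite -subr_eq0; apply/eqP.
transitivity (be * (be ^+ 2 - (x1 ^+ 2 + x2 ^+ 2 + x3 ^+ 2))); first ring.
by rewrite hs subrr mulr0.
Qed.

Lemma qclassP q x : qim2 q != 0 -> qclass q x <-> qa x = qa q /\ qnorm2 x = qnorm2 q.
Proof.
move=> qnr; split; first exact: qclass_invariants.
case=> ax Nx; pose z := Complex (qa q) (Num.sqrt (qim2 q)).
have im2_ge0 : 0 <= qim2 q by rewrite /qim2 !addr_ge0 ?sqr_ge0.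
have znr : complex.Im z != 0 by rewrite /= gt_eqF // sqrtr_gt0 lt_def qnr im2_ge0.
have Nz : cnorm2 z = qnorm2 q by rewrite /cnorm2 /= sqr_sqrtr // /qnorm2 /qim2; ring.
apply: qclass_trans (qclass_sym (qclass_qofC znr _ _)) (qclass_qofC znr _ _) => //.
by rewrite Nx.
Qed.

Lemma qim2_qofC z : qim2 (qofC z) = complex.Im z ^+ 2.
Proof. by rewrite /qim2 /= expr0n /= !addr0. Qed.

Lemma qim2_qofR (r : R) : qim2 (qofR r) = 0.
Proof. by rewrite /qim2 /= expr0n /= !addr0. Qed.

Lemma qa_qofC z : qa (qofC z) = complex.Re z. Proof. by case: z. Qed.

Lemma qnorm2_qofC z : qnorm2 (qofC z) = cnorm2 z.
Proof. by case: z => a b; rewrite /qnorm2 /cnorm2 /=; ring. Qed.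

Lemma qclass_qofCP z x : complex.Im z != 0 ->
  qclass (qofC z) x <-> qa x = complex.Re z /\ qnorm2 x = cnorm2 z.
Proof. by move=> znr; rewrite qclassP ?qim2_qofC ?sqrf_eq0 ?qa_qofC ?qnorm2_qofC. Qed.

End ConjugacyClasses.

Section Reduction.
Variable R : rcfType.
Local Notation H := (quat R).
Local Notation C := R[i].
Variables (n : nat) (p : nat -> H) (d0 : R).
Local Notation c := (qcoefs p d0).
Local Notation powA a N i := (quad_pow_coefs a N i).1.
Local Notation powB a N i := (quad_pow_coefs a N i).2.

Definition redP (a N : R) : H := \sum_(i < n.+1) c i * qofR (powA a N i).
Definition redQ (a N : R) : H := \sum_(i < n.+1) c i * qofR (powB a N i).

Lemma qhorner_reduced x :
  qhorner n c x = redP (qa x) (qnorm2 x) * x + redQ (qa x) (qnorm2 x).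
Proof.
rewrite /qhorner; under eq_bigr do rewrite (quad_pow (f := @qofR R) (quat_quadratic x)).
by rewrite /redP /redQ mulr_suml -big_split; apply: eq_bigr => i _; rewrite mulrDr mulrA.
Qed.

Lemma horner_reduced (E : nat -> C) (a N : R) (w : C) :
  w * w = (2 * a)%:C * w - N%:C ->
  (\poly_(i < n.+1) E i).[w] =
    (\sum_(i < n.+1) E i * (powA a N i)%:C) * w + \sum_(i < n.+1) E i * (powB a N i)%:C.
Proof.
move=> ww; rewrite horner_poly; under eq_bigr do rewrite (quad_pow (f := real_complex R) ww).
by rewrite mulr_suml -big_split; apply: eq_bigr => i _; rewrite mulrDr mulrA.
Qed.

Lemma qt1_sum_qofR (F : 'I_n.+1 -> R) :
  qt1 (\sum_(i < n.+1) c i * qofR (F i)) = \sum_(i < n.+1) qt1 (c i) * (F i)%:C.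
Proof. by rewrite raddf_sum; apply: eq_bigr => i _; rewrite mulq_qofR; exact: qt1_quatC. Qed.

Lemma qt2_sum_qofR (F : 'I_n.+1 -> R) :
  qt2 (\sum_(i < n.+1) c i * qofR (F i)) = \sum_(i < n.+1) qt2 (c i) * (F i)%:C.
Proof. by rewrite raddf_sum; apply: eq_bigr => i _; rewrite mulq_qofR; exact: qt2_quatC. Qed.

Lemma f1_qcoefs : f1 n p d0 = \poly_(i < n.+1) qt1 (c i).
Proof. by apply: eq_poly => -[|i]. Qed.
Lemma f2_qcoefs : f2 n p = \poly_(i < n.+1) qt2 (c i).
Proof. by apply: eq_poly => -[|i]. Qed.
Lemma f1bar_qcoefs : f1bar n p d0 = \poly_(i < n.+1) conjc (qt1 (c i)).
Proof. by apply: eq_poly => -[|i] //= _; rewrite oppr0. Qed.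
Lemma f2bar_qcoefs : f2bar n p = \poly_(i < n.+1) conjc (qt2 (c i)).
Proof. by apply: eq_poly => -[|i] //= _; rewrite oppr0. Qed.

Section AtRoot.
Variables (a N : R) (w : C).
Hypothesis ww : w * w = (2 * a)%:C * w - N%:C.
Local Notation P1 := (qt1 (redP a N)).
Local Notation P2 := (qt2 (redP a N)).
Local Notation Q1 := (qt1 (redQ a N)).
Local Notation Q2 := (qt2 (redQ a N)).

Lemma horner_f1 : (f1 n p d0).[w] = P1 * w + Q1.
Proof. by rewrite f1_qcoefs (horner_reduced _ ww) /redP /redQ !qt1_sum_qofR. Qed.
Lemma horner_f2 : (f2 n p).[w] = P2 * w + Q2.
Proof. by rewrite f2_qcoefs (horner_reduced _ ww) /redP /redQ !qt2_sum_qofR. Qed.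
Lemma horner_f1bar : (f1bar n p d0).[w] = conjc P1 * w + conjc Q1.
Proof.
rewrite f1bar_qcoefs (horner_reduced _ ww) /redP /redQ !qt1_sum_qofR !rmorph_sum.
by congr (_ * _ + _); apply: eq_bigr => i _; rewrite rmorphM -[in LHS]conjc_real.
Qed.
Lemma horner_f2bar : (f2bar n p).[w] = conjc P2 * w + conjc Q2.
Proof.
rewrite f2bar_qcoefs (horner_reduced _ ww) /redP /redQ !qt2_sum_qofR !rmorph_sum.
by congr (_ * _ + _); apply: eq_bigr => i _; rewrite rmorphM -[in LHS]conjc_real.
Qed.
Lemma horner_ptilde : (ptilde n p d0).[w] =
  (P1 * w + Q1) * (conjc P1 * w + conjc Q1) + (P2 * w + Q2) * (conjc P2 * w + conjc Q2).
Proof. by rewrite /ptilde hornerD !hornerM horner_f1 horner_f2 horner_f1bar horner_f2bar. Qed.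

End AtRoot.
End Reduction.

(* If (X1, X2) solves the C-linear system equivalent to P x + Q = 0 for
   x = X1 + X2 j, the norm form of P w + Q factors through the minimal
   polynomial w^2 - (x + conj x) w + |x|^2 of x. *)
Lemma norm_form_factor (K : comPzRingType) (w X1 X1b X2 X2b P1 P1b P2 P2b Q1 Q1b Q2 Q2b : K) :
  P1 * X1 - P2 * X2b + Q1 = 0 -> P1b * X1b - P2b * X2 + Q1b = 0 ->
  P1 * X2 + P2 * X1b + Q2 = 0 -> P1b * X2b + P2b * X1 + Q2b = 0 ->
  (P1 * w + Q1) * (P1b * w + Q1b) + (P2 * w + Q2) * (P2b * w + Q2b) =
  (P1 * P1b + P2 * P2b) * (w * w - (X1 + X1b) * w + (X1 * X1b + X2 * X2b)).
Proof.
move=> h1 h2 h3 h4.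
have -> : Q1 = - (P1 * X1 - P2 * X2b) by apply/eqP; rewrite -addr_eq0 addrC h1.
have -> : Q1b = - (P1b * X1b - P2b * X2) by apply/eqP; rewrite -addr_eq0 addrC h2.
have -> : Q2 = - (P1 * X2 + P2 * X1b) by apply/eqP; rewrite -addr_eq0 addrC h3.
have -> : Q2b = - (P1b * X2b + P2b * X1) by apply/eqP; rewrite -addr_eq0 addrC h4.
ring.
Qed.

Section Zeros.
Variable R : rcfType.
Local Notation H := (quat R).
Local Notation C := R[i].
Implicit Types (x : H) (w e : C).
Variables (n : nat) (p : nat -> H) (d0 : R).
Local Notation c := (qcoefs p d0).
Local Notation P := (redP n p d0).
Local Notation Q := (redQ n p d0).

Lemma qzero_ofE x : qzero_of n c x <-> P (qa x) (qnorm2 x) * x + Q (qa x) (qnorm2 x) = 0.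
Proof. by rewrite /qzero_of qhorner_reduced. Qed.

Lemma root_ptilde_of_zero x w : qzero_of n c x ->
  w * w = (2 * qa x)%:C * w - (qnorm2 x)%:C -> root (ptilde n p d0) w.
Proof.
move=> /qzero_ofE; rewrite mul_add_quatC => /eqP; rewrite quatC_eq0 => /andP[/eqP h1 /eqP h3] ww.
have h2 := congr1 conjc h1; have h4 := congr1 conjc h3; rewrite !conjcE in h2 h4.
rewrite /root (horner_ptilde _ _ _ ww) (norm_form_factor w h1 h2 h3 h4).
by rewrite qt1_add_conjc (qnorm2_qt x) ww addrAC subrK subrr mulr0.
Qed.

Lemma inT1_reduced e : complex.Im e != 0 ->
  inT1 n p d0 e <-> P (complex.Re e) (cnorm2 e) = 0 /\ Q (complex.Re e) (cnorm2 e) = 0.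
Proof.
move=> enr; have ee := complex_quadratic e; split.
  case; rewrite (horner_f1 _ _ _ ee) (horner_f2 _ _ d0 ee) (horner_f1bar _ _ _ ee).
  rewrite (horner_f2bar _ _ d0 ee) => h1 h2 /(congr1 conjc) h3 /(congr1 conjc) h4.
  rewrite !conjcE in h3 h4.
  have [P1 Q1] := affine_eq0_conj enr h1 h3; have [P2 Q2] := affine_eq0_conj enr h2 h4.
  by rewrite [P _ _]quatC_split [Q _ _]quatC_split P1 P2 Q1 Q2.
move=> [P0 Q0]; rewrite /inT1 (horner_f1 _ _ _ ee) (horner_f2 _ _ d0 ee) (horner_f1bar _ _ _ ee).
by rewrite (horner_f2bar _ _ d0 ee) P0 Q0 (raddf0 (@qt1 R)) (raddf0 (@qt2 R)) rmorph0 mul0r addr0.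
Qed.

Lemma inT1P e : reflect (inT1 n p d0 e)
  [&& (f1 n p d0).[e] == 0, (f2 n p).[e] == 0, (f1bar n p d0).[e] == 0 & (f2bar n p).[e] == 0].
Proof.
by apply: (iffP and4P) => [[/eqP ? /eqP ? /eqP ? /eqP ?] | [-> -> -> ->]].
Qed.

Lemma inT1_of_zeros e : complex.Im e != 0 -> qzero_of n c (qofC e) ->
  qzero_of n c (qofC (conjc e)) -> inT1 n p d0 e.
Proof.
move=> enr /qzero_ofE z1 /qzero_ofE z2; apply/inT1_reduced => //.
move: z1 z2; rewrite !qa_qofC !qnorm2_qofC Re_conjc cnorm2_conjc !mul_add_qofC conjcK.
move=> /eqP; rewrite quatC_eq0 => /andP[/eqP a1 /eqP a2].
move=> /eqP; rewrite quatC_eq0 => /andP[/eqP b1 /eqP b2].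
have [P1 Q1] := affine_eq0_conj enr a1 b1.
have [P2 Q2] := affine_eq0_conj enr b2 a2.
by rewrite [P _ _]quatC_split [Q _ _]quatC_split P1 P2 Q1 Q2.
Qed.

Lemma real_root_zero (xi : R) : root (ptilde n p d0) xi%:C -> qzero_of n c (qofR xi).
Proof.
have normJ u v : (u * xi%:C + v) * (conjc u * xi%:C + conjc v) =
                 (u * xi%:C + v) * conjc (u * xi%:C + v) by rewrite !conjcE.
rewrite /root (horner_ptilde _ _ _ (complex_quadratic xi%:C)) !normJ.
move=> /eqP /mulcJ_addr_eq0[F1 F2]; apply/qzero_ofE.
rewrite -[qofR xi]/(qofC xi%:C) qa_qofC qnorm2_qofC mul_add_qofC conjc_real F1 F2.
by apply/eqP; rewrite quatC_eq0 eqxx.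
Qed.

Lemma class_zero_of_inT1 e x : complex.Im e != 0 -> inT1 n p d0 e ->
  qclass (qofC e) x -> qzero_of n c x.
Proof.
move=> enr /(inT1_reduced enr)[P0 Q0] /(qclass_qofCP _ enr)[ax Nx].
by apply/qzero_ofE; rewrite ax Nx P0 Q0 mul0r addr0.
Qed.

Lemma real_zero_root x : qzero_of n c x -> qim2 x = 0 ->
  x = qofR (qa x) /\ root (ptilde n p d0) (qa x)%:C.
Proof.
case: x => a b c1 d zx; rewrite /qim2 /= => /eqP.
rewrite !paddr_eq0 ?addr_ge0 ?sqr_ge0 // !sqrf_eq0 => /andP[/andP[/eqP b0 /eqP c0] /eqP d0'].
subst; split=> //; apply: (root_ptilde_of_zero zx).
by have := complex_quadratic a%:C; rewrite /cnorm2 /qnorm2 /= expr0n /= !addr0.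
Qed.

End Zeros.

(* The barred variables stand for complex conjugates but are kept independent,
   so that the identities are field identities. *)
Lemma omega_field_identities (K : fieldType) (e eb P1 P1b P2 P2b Q1 Q1b Q2 Q2b : K) :
  let F1 := P1 * e + Q1 in let F1b := P1b * eb + Q1b in
  let F2 := P2 * e + Q2 in let F2b := P2b * eb + Q2b in
  let D := F1 * F1b + F2 * F2b in
  D != 0 -> F1b * (P1 * eb + Q1) + F2b * (P2 * eb + Q2) = 0 ->
  let X1 := D^-1 * (F2 * F2b * e + F1 * F1b * eb) in
  let X1b := D^-1 * (F2 * F2b * eb + F1 * F1b * e) in
  let X2 := - (D^-1 * (F2 * F1b * (e - eb))) in
  let X2b := - (D^-1 * (F2b * F1 * (eb - e))) in
  [/\ P1 * X1 - P2 * X2b + Q1 = 0, P1 * X2 + P2 * X1b + Q2 = 0,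
      X1 + X1b = e + eb & X1 * X1b + X2 * X2b = e * eb].
Proof.
move=> F1 F1b F2 F2b D Dnz root_eb X1 X1b X2 X2b; split.
- transitivity (D^-1 * (F1 * (F1b * (P1 * eb + Q1) + F2b * (P2 * eb + Q2)))).
    by rewrite /X1 /X2b /D /F1 /F1b /F2 /F2b; field.
  by rewrite root_eb !mulr0.
- transitivity (D^-1 * (F2 * (F1b * (P1 * eb + Q1) + F2b * (P2 * eb + Q2)))).
    by rewrite /X2 /X1b /D /F1 /F1b /F2 /F2b; field.
  by rewrite root_eb !mulr0.
- by rewrite /X1 /X1b /D /F1 /F1b /F2 /F2b; field.
- by rewrite /X1 /X1b /X2 /X2b /D /F1 /F1b /F2 /F2b; field.
Qed.

Lemma omega_solution (R : rcfType) (e P1 P2 Q1 Q2 : R[i]) :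
  let F1 := P1 * e + Q1 in let F2 := P2 * e + Q2 in
  let D := F1 * conjc F1 + F2 * conjc F2 in
  D != 0 -> conjc F1 * (P1 * conjc e + Q1) + conjc F2 * (P2 * conjc e + Q2) = 0 ->
  let X1 := D^-1 * (F2 * conjc F2 * e + F1 * conjc F1 * conjc e) in
  let X2 := - (D^-1 * (F2 * conjc F1 * (e - conjc e))) in
  [/\ P1 * X1 - P2 * conjc X2 + Q1 = 0, P1 * X2 + P2 * conjc X1 + Q2 = 0,
      X1 + conjc X1 = e + conjc e & X1 * conjc X1 + X2 * conjc X2 = e * conjc e].
Proof.
move=> F1 F2 D Dnz root_eJ X1 X2.
have DJ : conjc D = D by rewrite /D /F1 /F2 !conjcE; ring.
have -> : conjc X1 = D^-1 * (F2 * conjc F2 * conjc e + F1 * conjc F1 * e).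
  by rewrite /X1 conjcM conjc_inv DJ; congr (_ * _); rewrite /F1 /F2 !conjcE; ring.
have -> : conjc X2 = - (D^-1 * (conjc F2 * F1 * (conjc e - e))).
  by rewrite /X2 conjcN conjcM conjc_inv DJ; congr (- (_ * _)); rewrite /F1 /F2 !conjcE; ring.
rewrite /X1 /X2 /D /F1 /F2 !conjcE in Dnz root_eJ *.
exact: (omega_field_identities Dnz root_eJ).
Qed.

Section Omega.
Variable R : rcfType.
Local Notation H := (quat R).
Local Notation C := R[i].
Implicit Types (x y : H) (e : C).
Variables (n : nat) (p : nat -> H) (d0 : R).
Local Notation c := (qcoefs p d0).
Local Notation P := (redP n p d0).
Local Notation Q := (redQ n p d0).

Definition omega_branch e : H :=
  let F1 := (f1 n p d0).[e] in let F2 := (f2 n p).[e] in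
  let D := csq F1 + csq F2 in
  qofC (D^-1 * (csq F2 * e + csq F1 * conjc e))
  - qofC (D^-1 * (2 * F2 * conjc F1 * Complex (complex.Im e) 0)) * qk R.

Lemma omega_branches e : omega n p d0 e =
  if csq (f1 n p d0).[e] + csq (f2 n p).[e] != 0 then omega_branch e
  else omega_branch (conjc e).
Proof.
rewrite /omega /omega_branch; case: ifP => // _; rewrite conjcK.
have -> : Complex (complex.Im (conjc e)) 0 = - Complex (complex.Im e) 0.
  by case: e => a b; apply/eqP; rewrite eq_complex /= oppr0 !eqxx.
rewrite !mulrN qofCN mulNr opprK.
by congr (qofC (_ * _) + _); rewrite addrC.
Qed.

Lemma omega_branch_quatC e :
  let F1 := (f1 n p d0).[e] in let F2 := (f2 n p).[e] in
  let D := F1 * conjc F1 + F2 * conjc F2 in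
  omega_branch e = quatC (D^-1 * (F2 * conjc F2 * e + F1 * conjc F1 * conjc e))
                         (- (D^-1 * (F2 * conjc F1 * (e - conjc e)))).
Proof.
rewrite /omega_branch /csq !qofC_quatC qk_quatC quatCM quatCN quatCD.
rewrite subcJ -[Complex (complex.Im e) 0]/((complex.Im e)%:C) !conjcE.
by congr quatC; ring.
Qed.

Lemma omega_branch_spec e : complex.Im e != 0 -> root (ptilde n p d0) e ->
  csq (f1 n p d0).[e] + csq (f2 n p).[e] != 0 ->
  [/\ qa (omega_branch e) = complex.Re e, qnorm2 (omega_branch e) = cnorm2 e
    & qzero_of n c (omega_branch e)].
Proof.
move=> enr; have ee := complex_quadratic e.
rewrite /root (horner_ptilde _ _ _ ee) omega_branch_quatC /csq.
rewrite (horner_f1 _ _ _ ee) (horner_f2 _ _ d0 ee).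
set P1 := qt1 (P _ _); set P2 := qt2 (P _ _); set Q1 := qt1 (Q _ _); set Q2 := qt2 (Q _ _).
move=> /eqP root_e Dnz.
have root_eJ : conjc (P1 * e + Q1) * (P1 * conjc e + Q1) +
               conjc (P2 * e + Q2) * (P2 * conjc e + Q2) = 0.
  by move: (congr1 conjc root_e); rewrite rmorph0 !conjcE => <-; ring.
have [h1 h2 h3 h4] := omega_solution Dnz root_eJ.
have [qaX NX zX] := solution_in_class h1 h2 h3 h4.
by split=> //; apply/qzero_ofE; rewrite qaX NX.
Qed.

Lemma horner_f1bar_conjc e : (f1bar n p d0).[e] = conjc (f1 n p d0).[conjc e].
Proof.
rewrite (horner_f1bar _ _ _ (complex_quadratic e)).
by rewrite (horner_f1 _ _ _ (complex_quadraticJ e)) !conjcE.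
Qed.

Lemma horner_f2bar_conjc e : (f2bar n p).[e] = conjc (f2 n p).[conjc e].
Proof.
rewrite (horner_f2bar _ _ d0 (complex_quadratic e)).
by rewrite (horner_f2 _ _ d0 (complex_quadraticJ e)) !conjcE.
Qed.

Lemma horner_ptilde_conjc e : (ptilde n p d0).[conjc e] = conjc (ptilde n p d0).[e].
Proof.
rewrite (horner_ptilde _ _ _ (complex_quadratic e)).
by rewrite (horner_ptilde _ _ _ (complex_quadraticJ e)) !conjcE mulrC [in X in _ + X]mulrC.
Qed.

Lemma omega_spec e : complex.Im e != 0 -> root (ptilde n p d0) e -> ~ inT1 n p d0 e ->
  [/\ qa (omega n p d0 e) = complex.Re e, qnorm2 (omega n p d0 e) = cnorm2 e
    & qzero_of n c (omega n p d0 e)].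
Proof.
move=> enr root_e notT1; rewrite omega_branches; case: ifPn => [|/negPn/eqP D0].
  exact: omega_branch_spec.
have [F1 F2] := mulcJ_addr_eq0 D0.
have DJnz : csq (f1 n p d0).[conjc e] + csq (f2 n p).[conjc e] != 0.
  apply/eqP => /mulcJ_addr_eq0[G1 G2]; apply: notT1.
  by split; rewrite ?horner_f1bar_conjc ?horner_f2bar_conjc ?F1 ?F2 ?G1 ?G2 ?rmorph0.
have eJnr : complex.Im (conjc e) != 0 by rewrite Im_conjc oppr_eq0.
have root_eJ : root (ptilde n p d0) (conjc e).
  by rewrite /root horner_ptilde_conjc (eqP root_e) rmorph0.
by rewrite -Re_conjc -cnorm2_conjc; exact: omega_branch_spec.
Qed.

Lemma qzero_unique_in_class x y : qzero_of n c x -> qzero_of n c y ->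
  qa x = qa y -> qnorm2 x = qnorm2 y -> P (qa x) (qnorm2 x) != 0 -> x = y.
Proof.
move=> /qzero_ofE zx /qzero_ofE zy ax Nx Pnz; rewrite -ax -Nx in zy.
have Pu : P (qa x) (qnorm2 x) \is a GRing.unit by rewrite qunitE.
apply: (mulrI Pu); apply: (addIr (Q (qa x) (qnorm2 x))).
by rewrite zx zy.
Qed.

End Omega.

Section Representatives.
Variable R : rcfType.
Local Notation H := (quat R).
Local Notation C := R[i].
Implicit Types (x : H) (e : C).
Variables (n : nat) (p : nat -> H) (d0 : R) (S : seq C).
Local Notation c := (qcoefs p d0).
Hypothesis reps : nonreal_reps (ptilde n p d0) S.

Lemma rep_root e : e \in S -> root (ptilde n p d0) e /\ complex.Im e != 0.
Proof. by case: reps => _ + _ _; apply. Qed.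

Lemma rep_inj e e' : e \in S -> e' \in S ->
  complex.Re e = complex.Re e' -> cnorm2 e = cnorm2 e' -> e = e'.
Proof.
move=> eS e'S Re_eq N_eq; case: (eq_Re_cnorm2 Re_eq N_eq) => // e'J.
by case: reps => _ _ /(_ _ eS); rewrite -e'J e'S.
Qed.

Lemma qim2_rep e x :
  e \in S -> qa x = complex.Re e -> qnorm2 x = cnorm2 e -> qim2 x != 0.
Proof.
move=> /rep_root[_ enr] ax Nx; have -> : qim2 x = qnorm2 x - qa x ^+ 2.
  by rewrite /qim2 /qnorm2; ring.
by rewrite Nx ax /cnorm2 addrC addKr sqrf_eq0.
Qed.

Lemma nonreal_zero_in_class x : qzero_of n c x -> qim2 x != 0 ->
  exists2 e, e \in S & qclass (qofC e) x.
Proof.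
move=> zx xnr; have im2_ge0 : 0 <= qim2 x by rewrite /qim2 !addr_ge0 ?sqr_ge0.
pose z := Complex (qa x) (Num.sqrt (qim2 x)).
have znr : complex.Im z != 0 by rewrite /= gt_eqF // sqrtr_gt0 lt_def xnr im2_ge0.
have Nz : cnorm2 z = qnorm2 x by rewrite /cnorm2 /= sqr_sqrtr // /qim2 /qnorm2; ring.
have root_z : root (ptilde n p d0) z.
  by apply: (root_ptilde_of_zero zx); rewrite -Nz; exact: complex_quadratic.
case: reps => _ _ _ /(_ _ root_z znr) [zS|zJS].
  by exists z => //; apply/(qclass_qofCP _ znr).
exists (conjc z) => //; apply/qclass_qofCP; first by rewrite Im_conjc oppr_eq0.
by rewrite Re_conjc cnorm2_conjc.
Qed.

Lemma omega_not_spherical e : e \in S -> ~ inT1 n p d0 e ->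
  ~ spherical_zero n c (omega n p d0 e).
Proof.
move=> eS notT1 [_ sph]; have [root_e enr] := rep_root eS.
have [ax Nx _] := omega_spec enr root_e notT1.
have xnr := qim2_rep eS ax Nx.
apply: notT1; apply: (inT1_of_zeros enr); apply: sph; apply/qclassP => //.
  by rewrite qa_qofC qnorm2_qofC.
by rewrite qa_qofC Re_conjc qnorm2_qofC cnorm2_conjc.
Qed.

Lemma omega_rep_spec e : e \in S -> ~ inT1 n p d0 e ->
  [/\ qa (omega n p d0 e) = complex.Re e, qnorm2 (omega n p d0 e) = cnorm2 e
    & qzero_of n c (omega n p d0 e)].
Proof. by move=> /rep_root[root_e enr]; exact: omega_spec. Qed.

Lemma class_rep_invariants e x : e \in S -> qclass (qofC e) x ->
  qa x = complex.Re e /\ qnorm2 x = cnorm2 e.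
Proof. by move=> /rep_root[_ enr] /(qclass_qofCP _ enr). Qed.

Lemma qzero_of_parts x : qzero_of n c x <->
  part_real n p d0 x \/ part_omega n p d0 S x \/ part_sphere n p d0 S x.
Proof.
split=> [zx | [[xi [root_xi ->]] | [[e eS [notT1 ->]] | [e eS [T1 ex]]]]].
- have [/eqP x_real | xnr] := boolP (qim2 x == 0).
    by have [-> root_a] := real_zero_root zx x_real; left; exists (qa x).
  have [e eS ex] := nonreal_zero_in_class zx xnr; right.
  have [_ enr] := rep_root eS; have [ax Nx] := class_rep_invariants eS ex.
  have [T1 | notT1] := boolP [&& (f1 n p d0).[e] == 0, (f2 n p).[e] == 0,
                               (f1bar n p d0).[e] == 0 & (f2bar n p).[e] == 0].
    by right; exists e => //; split=> //; apply/inT1P.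
  move/inT1P: notT1 => notT1; left; exists e => //; split=> //.
  have Pnz : redP n p d0 (qa x) (qnorm2 x) != 0.
    apply/eqP => P0; apply: notT1; apply/(inT1_reduced _ _ _ enr).
    by move/qzero_ofE: zx; rewrite -ax -Nx P0 mul0r add0r.
  have [ox Nox zox] := omega_rep_spec eS notT1.
  by apply: qzero_unique_in_class zx zox _ _ Pnz; rewrite ?ax ?Nx ?ox ?Nox.
- exact: real_root_zero.
- by have [_ _] := omega_rep_spec eS notT1.
- by have [_ enr] := rep_root eS; exact: class_zero_of_inT1 T1 ex.
Qed.

Lemma part_real_qim2 x : part_real n p d0 x -> qim2 x = 0.
Proof. by case=> xi [_ ->]; exact: qim2_qofR. Qed.

Lemma part_real_not_omega x : part_real n p d0 x -> ~ part_omega n p d0 S x.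
Proof.
move=> /part_real_qim2 x_real [e eS [notT1 ex]].
have [ax Nx _] := omega_rep_spec eS notT1.
by move: (qim2_rep eS ax Nx); rewrite -ex x_real eqxx.
Qed.

Lemma part_real_not_sphere x : part_real n p d0 x -> ~ part_sphere n p d0 S x.
Proof.
move=> /part_real_qim2 x_real [e eS [_ ex]].
have [ax Nx] := class_rep_invariants eS ex.
by move: (qim2_rep eS ax Nx); rewrite x_real eqxx.
Qed.

Lemma part_omega_not_sphere x : part_omega n p d0 S x -> ~ part_sphere n p d0 S x.
Proof.
move=> [e eS [notT1 ->]] [e' e'S [T1 ex]].
have [ax Nx _] := omega_rep_spec eS notT1.
have [ax' Nx'] := class_rep_invariants e'S ex.
by apply: notT1; rewrite (rep_inj eS e'S) -?ax -?Nx.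
Qed.

Lemma omega_rep_inj e e' : e \in S -> e' \in S -> ~ inT1 n p d0 e -> ~ inT1 n p d0 e' ->
  omega n p d0 e = omega n p d0 e' -> e = e'.
Proof.
move=> eS e'S notT1 notT1' eq_omega.
have [ax Nx _] := omega_rep_spec eS notT1; have [ax' Nx' _] := omega_rep_spec e'S notT1'.
by apply: rep_inj; rewrite // -?ax -?Nx eq_omega.
Qed.

Lemma class_rep_uniq e e' x : e \in S -> e' \in S ->
  qclass (qofC e) x -> qclass (qofC e') x -> e = e'.
Proof.
move=> eS e'S ex e'x; have [ax Nx] := class_rep_invariants eS ex.
by have [ax' Nx'] := class_rep_invariants e'S e'x; apply: rep_inj; rewrite // -?ax -?Nx.
Qed.

Lemma spherical_zero_parts x : spherical_zero n c x <-> part_sphere n p d0 S x.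
Proof.
split=> [[xnr sph] | [e eS [T1 ex]]].
  have /qzero_of_parts[x_real | [[e eS [notT1 ex]] | //]] := sph x (qclass_refl x).
    by case: xnr; case: x_real => xi [_ ->].
  by case: (omega_not_spherical eS notT1); rewrite -ex.
have [_ enr] := rep_root eS; have [ax Nx] := class_rep_invariants eS ex; split.
  case=> b0 c0 d0'; move: (qim2_rep eS ax Nx).
  by rewrite /qim2 b0 c0 d0' expr0n /= !addr0 eqxx.
move=> w /qclass_invariants[aw Nw]; apply: (class_zero_of_inT1 enr T1).
by apply/(qclass_qofCP _ enr); rewrite aw Nw.
Qed.

Lemma isolated_zero_parts x : isolated_zero n c x <->
  part_real n p d0 x \/ part_omega n p d0 S x.
Proof.
rewrite /isolated_zero qzero_of_parts spherical_zero_parts.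
split=> [[[? | [? | ?]] notsph] | [x_real | x_omega]] //; [by left | by right | | ].
  by split; [left | exact: part_real_not_sphere].
by split; [right; left | exact: part_omega_not_sphere].
Qed.

End Representatives.

(* The degree, leading-coefficient and constant-term hypotheses are not needed. *)
Theorem theorem1 (R : rcfType) (n : nat) (p : nat -> quat R) (d0 : R)
    (S : seq R[i]) :
  (0 < n)%N -> p n != 0 -> (d0 = 0 \/ d0 = 1) ->
  nonreal_reps (ptilde n p d0) S ->
  (forall x : quat R, qzero_of n (qcoefs p d0) x <->
     part_real n p d0 x \/ part_omega n p d0 S x \/ part_sphere n p d0 S x)
  /\ (forall x, part_real n p d0 x -> ~ part_omega n p d0 S x)
  /\ (forall x, part_real n p d0 x -> ~ part_sphere n p d0 S x)
  /\ (forall x, part_omega n p d0 S x -> ~ part_sphere n p d0 S x)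
  /\ (forall e e', e \in S -> e' \in S -> ~ inT1 n p d0 e -> ~ inT1 n p d0 e' ->
        omega n p d0 e = omega n p d0 e' -> e = e')
  /\ (forall e e' x, e \in S -> e' \in S -> inT1 n p d0 e -> inT1 n p d0 e' ->
        qclass (qofC e) x -> qclass (qofC e') x -> e = e')
  /\ (forall x : quat R, isolated_zero n (qcoefs p d0) x <->
        part_real n p d0 x \/ part_omega n p d0 S x)
  /\ (forall x : quat R, spherical_zero n (qcoefs p d0) x <->
        part_sphere n p d0 S x).
Proof.
move=> _ _ _ reps.
split; first exact: qzero_of_parts reps.
split; first exact: part_real_not_omega reps.
split; first exact: part_real_not_sphere reps.
split; first exact: part_omega_not_sphere reps.
split; first exact: omega_rep_inj reps.
split; first by move=> e e' x eS e'S _ _; exact: (class_rep_uniq reps eS e'S).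
by split; [exact: isolated_zero_parts reps | exact: spherical_zero_parts reps].
Qed.
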